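(* Let $X$ be a real Banach space. Then $\operatorname{sm}(B_X)\in\{0,1\}$.
   Context: $B_X$ is the closed unit ball of $X$. A bounded sequence $(y_k)$ generates an $\ell_1$-spreading model with $\delta>0$ if $\|\sum_{i\in F}\alpha_i y_i\|\ge\delta\sum_{i\in F}|\alpha_i|$ for every finite $F\subset\mathbb N$ with $\#F\le\min F$ and all real scalars $(\alpha_i)_{i\in F}$. For a bounded set $A$, $\operatorname{sm}(A)=\sup\{\delta>0: \exists (x_k)\subset A,\ x_k\to x\text{ weakly for some }x\in X,\ (x_k-x)\text{ generates an }\ell_1\text{-spreading model with }\delta\}$, with the convention $\sup\emptyset=0$. *)

From HB Require Import structures.
From mathcomp Require Import all_boot all_order all_algebra.
From mathcomp Require Import all_classical all_reals all_analysis.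
Set Implicit Arguments. Unset Strict Implicit. Unset Printing Implicit Defensive.
Import Order.TTheory GRing.Theory Num.Theory.
Import numFieldNormedType.Exports.
Local Open Scope classical_set_scope.
Local Open Scope ring_scope.

Definition closed_unit_ball (R : realType) (X : normedModType R) : set X :=
  [set x | `|x| <= 1].

Definition weak_cvg (R : realType) (X : normedModType R)
  (u : nat -> X) (x : X) : Prop :=
  forall f : X -> R,
    (forall (a : R) (y z : X), f (a *: y + z) = a * f y + f z) ->
    continuous f ->
    (fun k => f (u k)) @ \oo --> f x.

(* The sequence is indexed by nat, term k being the (k+1)-th term y_{k+1}
   of the paper's sequence indexed by N = {1,2,...}; hence the condition
   #F <= min F reads  size F <= i.+1  for all i in F. *)
Definition l1_spreading (R : realType) (X : normedModType R)
  (y : nat -> X) (delta : R) : Prop :=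
  forall (F : seq nat) (alpha : nat -> R),
    uniq F -> (forall i, i \in F -> (size F <= i.+1)%N) ->
    delta * (\sum_(i <- F) `|alpha i|) <= `|\sum_(i <- F) alpha i *: y i|.

Definition sm_set (R : realType) (X : normedModType R) (A : set X) : set R :=
  [set delta | 0 < delta /\
     exists (u : nat -> X) (x : X),
       (forall k, A (u k)) /\ weak_cvg u x /\
       l1_spreading (fun k => u k - x) delta].

Definition sm (R : realType) (X : normedModType R) (A : set X) : R :=
  if pselect (exists d, sm_set A d) then sup (sm_set A) else 0.

From HB Require Import structures.
From mathcomp Require Import all_boot all_order all_algebra.
From mathcomp Require Import all_classical all_reals all_analysis.
From mathcomp Require Import lra.
Set Implicit Arguments. Unset Strict Implicit. Unset Printing Implicit Defensive.
Import Order.TTheory GRing.Theory Num.Theory.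
Import numFieldNormedType.Exports.
Local Open Scope classical_set_scope.
Local Open Scope ring_scope.

(* Every constant of sm(B_X) is at most 1: for u_1, u_2 in the ball the
   spreading estimate gives 2 delta <= |u_1 - u_2| <= 2.  Conversely, a single
   bounded weakly null sequence (y_i) with an l1-spreading model yields every
   constant below 1.  Let lam be the infimum over n of the best lower
   l1-constant that (y_i) has on sufficiently far supports of size at most n.
   Any constant lam * b with b < 1 then holds on far tails for every support
   size, while for some size N every tail contains a block of at most N
   vectors whose norm is below lam * a times the l1-norm of its coefficients.
   Successive such blocks, normalised into the ball, are weakly null; a
   combination of them over an admissible set is a combination of the y_i on a
   far tail with support at most N times larger, which yields the constant
   (lam * b) / (lam * a) = b / a. *)

Section LinearFunctional.
Variables (R : realType) (X : normedModType R) (f : X -> R).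
Hypothesis f_lin : forall (a : R) (y z : X), f (a *: y + z) = a * f y + f z.

Lemma lfun0 : f 0 = 0.
Proof.
have := f_lin 1 0 0; rewrite scale1r addr0 mul1r.
by move=> /(congr1 (fun t => t - f 0)); rewrite addrK subrr.
Qed.

Lemma lfunB y z : f (y - z) = f y - f z.
Proof. by rewrite -scaleN1r addrC f_lin mulN1r addrC. Qed.

Lemma lfun_sum (I : Type) (s : seq I) (g : I -> R) (v : I -> X) :
  f (\sum_(i <- s) g i *: v i) = \sum_(i <- s) g i * f (v i).
Proof.
elim: s => [|k s IH]; first by rewrite !big_nil lfun0.
by rewrite !big_cons f_lin IH.
Qed.

End LinearFunctional.

Lemma weak_cvg_centered (R : realType) (X : normedModType R) (u : nat -> X) x :
  weak_cvg u x -> weak_cvg (fun k => u k - x) 0.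
Proof.
move=> ux f f_lin f_cont; rewrite lfun0 //.
under eq_fun => k do rewrite lfunB //.
by rewrite -(subrr (f x)); apply: cvgB; [exact: ux | exact: cvg_cst].
Qed.

Lemma weak_cvg_blocks (R : realType) (X : normedModType R) (y : nat -> X)
    (G : nat -> seq nat) (h : nat -> nat -> R) (C : R) :
  0 < C -> weak_cvg y 0 -> (forall k i, i \in G k -> (k <= i)%N) ->
  (forall k, \sum_(i <- G k) `|h k i| <= C) ->
  weak_cvg (fun k => \sum_(i <- G k) h k i *: y i) 0.
Proof.
move=> C_gt0 y0 G_ge h_le f f_lin f_cont; rewrite lfun0 //.
apply/cvgrPdist_le => e e_gt0.
have := y0 f f_lin f_cont; rewrite lfun0 // => /cvgrPdist_le /(_ (e / C)).
rewrite divr_gt0 // => /(_ isT) [K _ fyK]; exists K => // k /= Kk.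
rewrite sub0r normrN lfun_sum //; apply: le_trans (ler_norm_sum _ _ _) _.
have -> : e = e / C * C by rewrite divfK ?lt0r_neq0.
apply: le_trans (ler_wpM2l (ltW (divr_gt0 e_gt0 C_gt0)) (h_le k)).
rewrite mulr_sumr big_seq [leRHS]big_seq; apply: ler_sum => i iG.
rewrite normrM mulrC ler_wpM2r //.
have := fyK i; rewrite /= sub0r normrN; apply.
exact: leq_trans Kk (G_ge k i iG).
Qed.

Section DisjointBlocks.
Variables (R : numDomainType) (V : lmodType R).
Variables (G : nat -> seq nat) (h : nat -> nat -> R).
Hypothesis G_disjoint : forall k j i, k != j -> i \in G k -> i \in G j -> False.

Definition flat_coef (F : seq nat) (alpha : nat -> R) (i : nat) : R :=
  \sum_(k <- F) (if i \in G k then alpha k * h k i else 0).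

Lemma flat_coefE F alpha k i : uniq F -> k \in F -> i \in G k ->
  flat_coef F alpha i = alpha k * h k i.
Proof.
move=> uF kF iG; rewrite /flat_coef (bigD1_seq k) //= iG big1_seq ?addr0 //.
move=> j /andP[jk _]; case: ifP => // iGj.
by case: (G_disjoint jk iGj iG).
Qed.

Lemma uniq_flatten_blocks F : uniq F -> (forall k, uniq (G k)) ->
  uniq (flatten [seq G k | k <- F]).
Proof.
move=> + G_uniq; elim: F => [//|k F IH] /= /andP[kF uF].
rewrite cat_uniq IH // G_uniq andbT; apply/hasPn => i.
move=> /flatten_mapP[j jF iGj]; apply/negP => iGk.
by apply: (G_disjoint _ iGj iGk); apply: contraNneq kF => <-.
Qed.

Lemma sum_flatten_blocks (v : nat -> V) F alpha : uniq F ->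
  \sum_(k <- F) alpha k *: \sum_(i <- G k) h k i *: v i =
  \sum_(i <- flatten [seq G k | k <- F]) flat_coef F alpha i *: v i.
Proof.
move=> uF; rewrite big_flatten big_map; apply: eq_big_seq => k kF.
rewrite scaler_sumr; apply: eq_big_seq => i iG.
by rewrite (flat_coefE alpha uF kF iG) scalerA.
Qed.

Lemma norm_flat_coef F alpha : uniq F ->
  \sum_(i <- flatten [seq G k | k <- F]) `|flat_coef F alpha i| =
  \sum_(k <- F) `|alpha k| * \sum_(i <- G k) `|h k i|.
Proof.
move=> uF; rewrite big_flatten big_map; apply: eq_big_seq => k kF.
rewrite mulr_sumr; apply: eq_big_seq => i iG.
by rewrite (flat_coefE alpha uF kF iG) normrM.
Qed.

End DisjointBlocks.

Definition l1_lower_tail (R : realType) (X : normedModType R) (y : nat -> X)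
    (M m : nat) (r : R) : Prop :=
  forall (H : seq nat) (g : nat -> R), uniq H ->
    (forall i, i \in H -> (m <= i)%N) -> (size H <= M.+1)%N ->
    r * \sum_(i <- H) `|g i| <= `|\sum_(i <- H) g i *: y i|.

Section LowerTail.
Variables (R : realType) (X : normedModType R) (y : nat -> X).

Lemma l1_lower_tail_le M m r r' :
  r' <= r -> l1_lower_tail y M m r -> l1_lower_tail y M m r'.
Proof.
move=> r'r yr H g uH Hm sH; apply: le_trans (yr H g uH Hm sH).
by apply: ler_wpM2r => //; apply: sumr_ge0.
Qed.

Lemma l1_spreading_lower_tail d M : l1_spreading y d -> l1_lower_tail y M M d.
Proof.
move=> yd H g uH Hm sH; apply: yd => // i /Hm Mi.
by apply: leq_trans sH _; rewrite ltnS.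
Qed.

Lemma l1_lower_tail_le_norm M m r : l1_lower_tail y M m r -> r <= `|y m|.
Proof.
move=> /(_ [:: m] (fun=> 1) isT); rewrite !big_seq1 normr1 mulr1 scale1r.
by apply => // i; rewrite inE => /eqP->.
Qed.

Lemma not_l1_lower_tailP M m r : ~ l1_lower_tail y M m r ->
  exists H : seq nat, exists g : nat -> R, [/\ uniq H,
    forall i, i \in H -> (m <= i)%N, (size H <= M.+1)%N &
    `|\sum_(i <- H) g i *: y i| < r * \sum_(i <- H) `|g i|].
Proof.
move=> not_tail; apply: contra_notP not_tail => no_block H g uH Hm sH.
rewrite leNgt; apply/negP => lt; apply: no_block.
by exists H, g.
Qed.

End LowerTail.

Section AsymptoticConstant.
Variables (R : realType) (X : normedModType R) (y : nat -> X) (d B : R).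
Hypotheses (d_gt0 : 0 < d) (y_le : forall i, `|y i| <= B)
  (y_spreading : l1_spreading y d).

Let tail_consts M := [set r : R | exists m, l1_lower_tail y M m r].
Let sup_tail M := sup (tail_consts M).

Let tail_consts_d M : tail_consts M d.
Proof. by exists M; apply: l1_spreading_lower_tail. Qed.

Let has_sup_tail_consts M : has_sup (tail_consts M).
Proof.
split; first by exists d.
by exists B => r [m /l1_lower_tail_le_norm rm]; apply: le_trans rm (y_le m).
Qed.

Lemma asymptotic_l1_constant : exists2 lam : R, 0 < lam &
  (forall b M, b < 1 -> exists m, l1_lower_tail y M m (lam * b)) /\
  (forall a, 1 < a -> exists N, forall m, ~ l1_lower_tail y N m (lam * a)).
Proof.
pose lam := inf (range sup_tail).
have range_ne : range sup_tail !=set0 by exists (sup_tail 0%N), 0%N.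
have lb_range : lbound (range sup_tail) d.
  by move=> _ [M _ <-]; apply: sup_upper_bound.
have inf_range : has_inf (range sup_tail) by split=> //; exists d.
have lam_le M : lam <= sup_tail M by apply: ge_inf; [exists d | exists M].
have lam_gt0 : 0 < lam.
  exact: lt_le_trans d_gt0 (lb_le_inf range_ne lb_range).
exists lam => //; split=> [b M b1|a a1].
  have := @sup_adherent R (tail_consts M) (sup_tail M - lam * b) _
    (has_sup_tail_consts M).
  rewrite subr_gt0 (lt_le_trans _ (lam_le M)) ?gtr_pMr //.
  move=> /(_ isT) [r [m tail_r]]; rewrite opprB addrC subrK => lt_r.
  by exists m; apply: l1_lower_tail_le tail_r; apply: ltW.
have := @inf_adherent R (range sup_tail) (lam * (a - 1)) _ inf_range.
rewrite mulr_gt0 ?subr_gt0 // => /(_ isT) [_ [N _ <-]].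
rewrite mulrBr mulr1 addrC subrK => lt_N.
exists N => m tail_m.
have : lam * a <= sup_tail N by apply: sup_upper_bound => //; exists m.
by rewrite leNgt lt_N.
Qed.

End AsymptoticConstant.

Section BlockSequence.
Variables (R : realType) (X : normedModType R) (y : nat -> X).
Variables (r c : R) (N : nat).
Variables (thr : nat -> nat) (supp : nat -> seq nat) (coef : nat -> nat -> R).
Hypotheses (c_gt0 : 0 < c) (thrP : forall M, l1_lower_tail y M (thr M) r).
Hypotheses (supp_uniq : forall m, uniq (supp m))
  (supp_ge : forall m i, i \in supp m -> (m <= i)%N)
  (supp_size : forall m, (size (supp m) <= N.+1)%N)
  (supp_norm : forall m,
    `|\sum_(i <- supp m) coef m i *: y i| < c * \sum_(i <- supp m) `|coef m i|).

(* The k-th block starts past the previous block and past the threshold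
   needed for the tails of admissible sets whose least element is k. *)
Fixpoint block_start k : nat :=
  maxn (thr (N.+1 * k.+1))
    (if k is k'.+1 then
       maxn (block_start k').+1 (\max_(i <- supp (block_start k')) i).+1
     else 0).

Let G k := supp (block_start k).
Let l1_coef k := \sum_(i <- G k) `|coef (block_start k) i|.
Let h k i := (c * l1_coef k)^-1 * coef (block_start k) i.

Definition block_seq k : X := \sum_(i <- G k) h k i *: y i.

Lemma block_start_thr k : (thr (N.+1 * k.+1) <= block_start k)%N.
Proof. by case: k => [|k]; rewrite /= leq_maxl. Qed.

Lemma block_start_lt k : (block_start k < block_start k.+1)%N.
Proof. by rewrite /= !leq_max leqnn !orbT. Qed.

Lemma block_start_mono : {homo block_start : k j / (k <= j)%N}.
Proof.
apply: homo_leq => [//|k j l|k]; first exact: leq_trans.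
exact/ltnW/block_start_lt.
Qed.

Lemma block_start_ge k : (k <= block_start k)%N.
Proof. by elim: k => // k IH; exact: leq_ltn_trans IH (block_start_lt k). Qed.

Lemma mem_block k i : i \in G k ->
  (block_start k <= i)%N /\ (i < block_start k.+1)%N.
Proof.
move=> iG; split; first exact: supp_ge.
rewrite /= !leq_max ltnS; apply/orP; right; apply/orP; right.
exact: leq_bigmax_seq.
Qed.

Lemma blocks_disjoint k j i : k != j -> i \in G k -> i \in G j -> False.
Proof.
move=> + /mem_block[ki ik] /mem_block[ji ij]; case: ltngtP => // lt _.
  by have := leq_trans (block_start_mono lt) ji; rewrite leqNgt ik.
by have := leq_trans (block_start_mono lt) ki; rewrite leqNgt ij.
Qed.

Lemma l1_coef_gt0 k : 0 < l1_coef k.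
Proof.
have := le_lt_trans (normr_ge0 _) (supp_norm (block_start k)).
by rewrite pmulr_rgt0.
Qed.

Lemma block_l1 k : \sum_(i <- G k) `|h k i| = c^-1.
Proof.
rewrite /h (eq_bigr _ (fun i _ => normrM _ _)) -mulr_sumr -/(l1_coef k).
rewrite ger0_norm ?invr_ge0 ?mulr_ge0 ?(ltW c_gt0) ?(ltW (l1_coef_gt0 k)) //.
by rewrite invfM -mulrA mulVf ?mulr1 // lt0r_neq0 // l1_coef_gt0.
Qed.

Lemma block_seq_le1 k : `|block_seq k| <= 1.
Proof.
rewrite /block_seq /h.
rewrite (eq_bigr _ (fun i _ => esym (scalerA _ _ _))) -scaler_sumr.
have cl_gt0 : 0 < c * l1_coef k by rewrite mulr_gt0 // l1_coef_gt0.
rewrite normrZ gtr0_norm ?invr_gt0 // ler_pdivrMl // mulr1.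
exact/ltW/supp_norm.
Qed.

Lemma block_seq_weak_null : weak_cvg y 0 -> weak_cvg block_seq 0.
Proof.
move=> y0; apply: (weak_cvg_blocks (C := c^-1)) => //.
- by rewrite invr_gt0.
- by move=> k i /mem_block[+ _]; apply: leq_trans (block_start_ge k).
- by move=> k; rewrite block_l1.
Qed.

Lemma block_seq_l1_spreading : l1_spreading block_seq (r / c).
Proof.
move=> F alpha uF F_adm.
set H := flatten [seq G k | k <- F].
have H_ge i : i \in H -> (thr (N.+1 * size F) <= i)%N.
  move=> /flatten_mapP[j jF /mem_block[+ _]]; apply: leq_trans.
  have sF : (size F).-1.+1 = size F by rewrite prednK //; case: (F) jF.
  rewrite -sF; apply: leq_trans (block_start_thr _) (block_start_mono _).
  by rewrite -ltnS sF F_adm.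
have size_H : (size H <= N.+1 * size F)%N.
  rewrite size_flatten /shape sumnE !big_map.
  apply: (@leq_trans (\sum_(j <- F) N.+1)).
    by apply: leq_sum => k _; exact: supp_size.
  by rewrite big_const_seq count_predT iter_addn_0 mulnC.
have uH : uniq H.
  exact: (uniq_flatten_blocks blocks_disjoint uF (fun k => supp_uniq _)).
have := thrP (flat_coef G h F alpha) uH H_ge (leqW size_H).
rewrite (norm_flat_coef _ blocks_disjoint) //.
rewrite -(sum_flatten_blocks _ blocks_disjoint) //.
under eq_bigr => k _ do rewrite block_l1.
by rewrite -mulr_suml mulrA mulrAC.
Qed.

End BlockSequence.

Lemma l1_spreading_block_sequence (R : realType) (X : normedModType R)
    (y : nat -> X) (r c : R) (N : nat) :
  0 < c -> (forall M, exists m, l1_lower_tail y M m r) ->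
  (forall m, ~ l1_lower_tail y N m c) ->
  exists u : nat -> X, [/\ forall k, `|u k| <= 1,
    weak_cvg y 0 -> weak_cvg u 0 & l1_spreading u (r / c)].
Proof.
move=> c_gt0 /choice[thr thrP] /(_ _)/not_l1_lower_tailP no_tail.
have /choice[supp /choice[coef]] := no_tail.
move=> /all_and4[supp_uniq supp_ge supp_size supp_norm].
exists (block_seq y c N thr supp coef); split.
- exact: block_seq_le1.
- exact: block_seq_weak_null.
- exact: block_seq_l1_spreading.
Qed.

Lemma bounded_l1_spreading_blocks (R : realType) (X : normedModType R)
    (y : nat -> X) (d B a b : R) :
  0 < d -> (forall i, `|y i| <= B) -> l1_spreading y d -> b < 1 -> 1 < a ->
  exists u : nat -> X, [/\ forall k, `|u k| <= 1,
    weak_cvg y 0 -> weak_cvg u 0 & l1_spreading u (b / a)].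
Proof.
move=> d_gt0 y_le y_sp b1 a1.
have [lam lam_gt0 [lower upper]] := asymptotic_l1_constant d_gt0 y_le y_sp.
have [N noN] := upper a a1.
have a_gt0 : 0 < a by apply: lt_trans a1.
have := l1_spreading_block_sequence (mulr_gt0 lam_gt0 a_gt0)
  (lower b ^~ b1) noN.
by rewrite invfM mulrACA mulfV ?mul1r // lt0r_neq0.
Qed.

Lemma sm_set_ball_le1 (R : realType) (X : normedModType R) t :
  sm_set (@closed_unit_ball R X) t -> t <= 1.
Proof.
move=> [_ [u [x [u_ball [_ u_sp]]]]].
have adm i : i \in [:: 1%N; 2%N] -> (size [:: 1%N; 2%N] <= i.+1)%N.
  by rewrite !inE => /orP[]/eqP->.
have := @u_sp [:: 1%N; 2%N] (fun i => if i == 1%N then 1 else -1) isT adm.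
rewrite !big_cons !big_nil /= !addr0 normrN normr1 scale1r scaleN1r.
rewrite opprB addrA subrK => t_le.
have : `|u 1%N - u 2%N| <= 1 + 1.
  exact: le_trans (ler_normB _ _) (lerD (u_ball _) (u_ball _)).
lra.
Qed.

Lemma sm_set_ball_lt1 (R : realType) (X : normedModType R) d t :
  sm_set (@closed_unit_ball R X) d -> 0 < t < 1 ->
  sm_set (@closed_unit_ball R X) t.
Proof.
move=> [d_gt0 [u [x [u_ball [ux u_sp]]]]] /andP[t_gt0 t_lt1].
have y_le i : `|u i - x| <= 1 + `|x|.
  by apply: le_trans (ler_normB _ _) _; rewrite lerD2r; apply: u_ball.
pose b := (1 + t) / 2.
have b_lt1 : b < 1 by rewrite /b ltr_pdivrMr; lra.
have tb : t < b by rewrite /b ltr_pdivlMr; lra.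
have a_gt1 : 1 < b / t by rewrite ltr_pdivlMr // mul1r.
have [v [v_ball v_weak]] :=
  bounded_l1_spreading_blocks d_gt0 y_le u_sp b_lt1 a_gt1.
rewrite invf_div mulrC divfK; last by apply: lt0r_neq0; apply: lt_trans tb.
move=> v_sp; split=> //; exists v, 0; split=> //; split.
  exact/v_weak/weak_cvg_centered.
by under eq_fun do rewrite subr0.
Qed.

Theorem lemma5p3 (R : realType) (X : completeNormedModType R) :
  @sm R X (@closed_unit_ball R X) = 0 \/ @sm R X (@closed_unit_ball R X) = 1.
Proof.
rewrite /sm; case: pselect => [[d Sd]|]; [right | by left].
set S := sm_set _.
have S_sup : has_sup S by split; [exists d | exists 1 => t /sm_set_ball_le1].
apply/eqP; rewrite eq_le ge_sup; [|by exists d|by move=> t /sm_set_ball_le1].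
rewrite leNgt; apply/negP => sup_lt1.
have sup_gt0 : 0 < sup S := lt_le_trans Sd.1 (sup_upper_bound S_sup Sd).
have : S ((1 + sup S) / 2).
  apply: sm_set_ball_lt1 Sd _; apply/andP.
  by split; rewrite ?ltr_pdivrMr ?divr_gt0; lra.
by move=> /(sup_upper_bound S_sup); rewrite ler_pdivrMr //; lra.
Qed.
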